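(* There are uncountably many paving tropical ideals of degree $3$ in $\mathbb{B}[x^{\pm1}]$ (in particular, uncountably many zero-dimensional tropical ideals of degree $3$ in $\mathbb{B}[x^{\pm1}]$).
   Context: $\mathbb{B}=\{\infty,0\}$ with $\oplus=\min$ and multiplication $+$; $\operatorname{supp}(f)$ is the set of exponents with coefficient $\neq\infty$. A tropical ideal $I\subset\mathbb{B}[x^{\pm1}]$ is an ideal such that for all $f,g\in I$ and $u\in\operatorname{supp}(f)\cap\operatorname{supp}(g)$ there is $h\in I$ with $\operatorname{supp}(f)\Delta\operatorname{supp}(g)\subset\operatorname{supp}(h)\subset(\operatorname{supp}(f)\cup\operatorname{supp}(g))\setminus\{u\}$. Its underlying matroid on $\mathbb{Z}$ has as independent sets those containing no support of a polynomial of $I$. $I$ is zero-dimensional of degree $r$ iff this matroid has finite rank $r$. $I$ is a paving tropical ideal if it is zero-dimensional and every minimal support of a polynomial in $I$ (circuit) has size $\deg(I)$ or $\deg(I)+1$. *)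

From HB Require Import structures.
From mathcomp Require Import all_boot all_order all_algebra.
From mathcomp Require Import finmap.
Set Implicit Arguments. Unset Strict Implicit. Unset Printing Implicit Defensive.
Import GRing.Theory Num.Theory.
Local Open Scope fset_scope.

(* A Laurent polynomial over the Boolean semifield B = {oo, 0} (with
   oplus = min, otimes = +) is determined by its support, a finite set of
   exponents in Z: coefficient 0 on the support, oo elsewhere.
   The zero polynomial (all coefficients oo) is the empty set. *)
Definition Bpoly := {fset int}.

(* tropical sum f oplus g: coefficientwise min, i.e. union of supports *)
Definition Badd (f g : Bpoly) : Bpoly := f `|` g.
(* tropical product: x^a * x^b = x^(a+b), so support is the sumset *)
Definition Bmul (f g : Bpoly) : Bpoly := [fset (a + b)%R | a in f, b in g].

Definition supp (f : Bpoly) : {fset int} := f.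

Definition is_ideal (I : Bpoly -> Prop) : Prop :=
  I fset0 /\
  (forall f g, I f -> I g -> I (Badd f g)) /\
  (forall f g, I f -> I (Bmul g f)).

Definition tropical_ideal (I : Bpoly -> Prop) : Prop :=
  is_ideal I /\
  forall f g u, I f -> I g -> u \in supp f -> u \in supp g ->
    exists h, I h /\
      fsubset ((supp f `\` supp g) `|` (supp g `\` supp f)) (supp h) /\
      fsubset (supp h) ((supp f `|` supp g) `\ u).

(* independent (finite) sets of the underlying matroid on Z:
   they contain no support of a nonzero polynomial of I *)
Definition indep (I : Bpoly -> Prop) (S : {fset int}) : Prop :=
  forall f, I f -> f != fset0 -> ~ fsubset (supp f) S.

Definition matroid_rank (I : Bpoly -> Prop) (r : nat) : Prop :=
  (exists S, indep I S /\ #|` S| = r) /\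
  (forall S, indep I S -> (#|` S| <= r)%N).

Definition zero_dim_deg (I : Bpoly -> Prop) (r : nat) : Prop :=
  tropical_ideal I /\ matroid_rank I r.

Definition circuit (I : Bpoly -> Prop) (C : {fset int}) : Prop :=
  (exists f, I f /\ f != fset0 /\ supp f = C) /\
  (forall g, I g -> g != fset0 -> fsubset (supp g) C -> supp g = C).

Definition paving_tropical_ideal (I : Bpoly -> Prop) (d : nat) : Prop :=
  zero_dim_deg I d /\
  forall C, circuit I C -> #|` C| = d \/ #|` C| = d.+1.

From Stdlib Require Import Classical.
From mathcomp Require Import all_boot all_order all_algebra finmap zify.
Set Implicit Arguments. Unset Strict Implicit. Unset Printing Implicit Defensive.
Import GRing.Theory Num.Theory.
Local Open Scope fset_scope.
Local Open Scope ring_scope.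

(* For k : nat let tri k c = {c, c + 4^k, c + 3 * 4^k}.  The
   distance between two points of such a "triangle" (4^k, 2 * 4^k or
   3 * 4^k) determines k and the positions of the points, so two distinct
   triangles share at most one point.  For any predicate P on scales, let
   I_P consist of the empty set, the triangles tri k c with P k, and all
   sets of size >= 4 except the 4-sets containing such a triangle.  Using
   only this linearity, I_P is a tropical ideal (closed under unions, under
   products, and satisfying monomial elimination) whose matroid is paving of
   rank 3.  Since tri n 0 lies in I_P exactly when P n, a diagonal argument
   shows that no sequence F of ideals lists all the I_P: the predicate
   P k := ~ F k (tri k 0) yields an ideal different from every F k. *)

Lemma card_uniq_sub (s : seq int) (X : {fset int}) :
  uniq s -> {subset s <= X} -> (size s <= #|` X|)%N.
Proof.
move=> s_uniq sX; rewrite -(undup_id s_uniq) -card_fseq; apply: fsubset_leq_card.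
by apply/fsubsetP => x; rewrite in_fset; apply: sX.
Qed.

Lemma two_points (A : {fset int}) :
  (2 <= #|` A|)%N -> exists x y, [/\ x != y, x \in A & y \in A].
Proof.
move=> A2; have /fset0Pn[x xA] : A != fset0 by rewrite -cardfs_gt0 (leq_trans _ A2).
have /fset0Pn[y] : A `\ x != fset0.
  by rewrite -cardfs_gt0; move: A2; rewrite (cardfsD1 x) xA; lia.
by rewrite in_fsetD1 => /andP[yx yA]; exists x, y; rewrite eq_sym.
Qed.

Lemma card_ltn_sub (A B : {fset int}) v :
  fsubset A B -> v \in B -> v \notin A -> (#|` A| < #|` B|)%N.
Proof.
move=> AB vB vA; apply: fproper_ltn_card; rewrite fproperE AB /=.
by apply/fsubsetPn; exists v.
Qed.

Lemma card_fset3 (a b c : int) :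
  a != b -> a != c -> b != c -> #|` [fset a; b; c]| = 3%N.
Proof.
move=> ab ac bc; apply/eqP; rewrite eqn_leq; apply/andP; split.
  by rewrite !cardfsU !cardfs1; lia.
apply: (@card_uniq_sub [:: a; b; c]); first by rewrite /= !inE !negb_or ab ac bc.
by move=> x; rewrite !inE orbA.
Qed.

Lemma fset_max (X : {fset int}) :
  X != fset0 -> exists2 m, m \in X & forall x, x \in X -> x <= m.
Proof.
case/fset0Pn => x0 x0X.
case: (@Order.TotalTheory.arg_maxP _ _ _ [` x0X] predT (fun i : X => val i)) => //= m _ hm.
by exists (val m) => [|x xX]; [exact: valP | exact: (hm [` xX])].
Qed.

Definition shift (a : int) (X : {fset int}) : {fset int} := [fset a + x | x in X].

Lemma mem_shift a X z : (z \in shift a X) = (z - a \in X).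
Proof.
apply/imfsetP/idP => [[x xX ->]|zaX]; first by rewrite addrC addKr.
by exists (z - a) => //; rewrite addrC subrK.
Qed.

Lemma card_shift a X : #|` shift a X| = #|` X|.
Proof. by rewrite card_imfset //=; apply: addrI. Qed.

Lemma shiftK a X : shift (- a) (shift a X) = X.
Proof. by apply/fsetP => z; rewrite !mem_shift opprK addrK. Qed.

Lemma shiftS a A B : fsubset A B -> fsubset (shift a A) (shift a B).
Proof. by move=> /fsubsetP AB; apply/fsubsetP => z; rewrite !mem_shift => /AB. Qed.

Lemma mem_Bmul g f z :
  reflect (exists a b, [/\ a \in g, b \in f & z = a + b]) (z \in Bmul g f).
Proof.
apply: (iffP (imfset2P _ _ _ _ _)) => [[a ag [b bf ->]]|[a [b [ag bf ->]]]].
  by exists a, b.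
by exists a => //; exists b.
Qed.

Lemma in_Bmul g f a b : a \in g -> b \in f -> a + b \in Bmul g f.
Proof. by move=> ag bf; apply/mem_Bmul; exists a, b. Qed.

Lemma Bmul1 a f : Bmul [fset a] f = shift a f.
Proof.
apply/fsetP => z; rewrite mem_shift.
apply/mem_Bmul/idP => [[x [y [/[!inE]/eqP -> yf ->]]]|zaf]; first by rewrite addrC addKr.
by exists a, (z - a); split; rewrite ?inE //; lia.
Qed.

Lemma shift_sub_Bmul a g f : a \in g -> fsubset (shift a f) (Bmul g f).
Proof.
move=> ag; apply/fsubsetP => z; rewrite mem_shift => zaf.
have -> : z = a + (z - a) by lia.
exact: in_Bmul.
Qed.

(* If g has two monomials, g * f is strictly larger than f: the largest
   exponent of f, translated by the larger monomial, is new. *)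
Lemma Bmul_card_gt g f a b : a \in g -> b \in g -> a < b -> f != fset0 ->
  (#|` f| < #|` Bmul g f|)%N.
Proof.
move=> ag bg ab f0; have [m mf mmax] := fset_max f0.
rewrite -(card_shift a); apply: (card_ltn_sub (shift_sub_Bmul f ag) (in_Bmul bg mf)).
by rewrite mem_shift; apply/negP => /mmax; lia.
Qed.

Definition step (k : nat) : int := (4 ^ k)%N%:Z.

Lemma step_gt0 k : 0 < step k.
Proof. by rewrite ltz_nat expn_gt0. Qed.

Lemma step_sep k k' : (k < k')%N -> 3 * step k < step k'.
Proof.
move=> kk'; rewrite /step.
have : (4 ^ k * 4 <= 4 ^ k')%N by rewrite -expnSr leq_exp2l.
have : (0 < 4 ^ k)%N by rewrite expn_gt0.
by lia.
Qed.

Definition tri (k : nat) (c : int) : {fset int} := [fset c; c + step k; c + 3 * step k].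

Lemma in_tri k c x :
  (x \in tri k c) = [|| x == c, x == c + step k | x == c + 3 * step k].
Proof. by rewrite !inE orbA. Qed.

Lemma card_tri k c : #|` tri k c| = 3%N.
Proof. by have := step_gt0 k => s_gt0; apply: card_fset3; apply/eqP; lia. Qed.

Lemma shift_tri a k c : shift a (tri k c) = tri k (a + c).
Proof.
apply/fsetP => z; rewrite mem_shift !in_tri.
by apply/or3P/or3P => -[]/eqP h; [apply: Or31|apply: Or32|apply: Or33|
  apply: Or31|apply: Or32|apply: Or33]; apply/eqP; lia.
Qed.

(* Linearity: two distinct points lie in at most one triangle, since their
   distance (4^k, 2 * 4^k or 3 * 4^k) determines k and their positions. *)
Lemma tri_linear k c k' c' x y : x != y ->
  x \in tri k c -> y \in tri k c -> x \in tri k' c' -> y \in tri k' c' ->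
  k = k' /\ c = c'.
Proof.
move=> /eqP xy; have := step_gt0 k; have := step_gt0 k' => s'_gt0 s_gt0.
rewrite !in_tri => /or3P[]/eqP hx /or3P[]/eqP hy /or3P[]/eqP hx' /or3P[]/eqP hy';
case: (ltngtP k k') => kk'; try (have := step_sep kk'; lia);
by subst k'; split => //; lia.
Qed.

Lemma Bmul_tri_card g k c a b : a \in g -> b \in g -> a < b ->
  (5 <= #|` Bmul g (tri k c)|)%N.
Proof.
move=> ag bg ab; have := step_gt0 k => s_gt0.
set x := c + step k; set y := c + 3 * step k.
have tri_c : c \in tri k c by rewrite in_tri eqxx.
have tri_x : x \in tri k c by rewrite in_tri eqxx orbT.
have tri_y : y \in tri k c by rewrite in_tri eqxx !orbT.
(* b + y is beyond a + tri; one of b + c and b + x is new as well. *)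
pose new := if b - a == 2 * step k then b + c else b + x.
have new_in : new \in Bmul g (tri k c) by rewrite /new; case: ifP => _; apply: in_Bmul.
apply: (@card_uniq_sub [:: a + c; a + x; a + y; b + y; new]).
  by rewrite /new /x /y; case: eqP => d /=; rewrite !inE !negb_or;
     repeat (apply/andP; split); apply/eqP; lia.
by move=> z; rewrite !inE => /or4P[|||/orP[|]]/eqP ->; rewrite ?new_in ?in_Bmul.
Qed.

Section PavingIdeal.
Variable P : nat -> Prop.

Definition Ptri (X : {fset int}) : Prop := exists k c, P k /\ X = tri k c.

Definition IP (X : {fset int}) : Prop :=
  X = fset0 \/ Ptri X \/
  ((4 <= #|` X|)%N /\ forall t, Ptri t -> fsubset t X -> (5 <= #|` X|)%N).

Lemma Ptri_card t : Ptri t -> #|` t| = 3%N.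
Proof. by case=> k [c [_ ->]]; apply: card_tri. Qed.

Lemma Ptri_neq0 t : Ptri t -> t != fset0.
Proof. by move/Ptri_card => t3; rewrite -cardfs_gt0 t3. Qed.

Lemma Ptri_linear t t' : Ptri t -> Ptri t' -> (2 <= #|` t `&` t'|)%N -> t = t'.
Proof.
case=> k [c [_ ->]] [k' [c' [_ ->]]] /two_points[x [y [xy]]].
rewrite !in_fsetI => /andP[xt xt'] /andP[yt yt'].
by have [-> ->] := tri_linear xy xt yt xt' yt'.
Qed.

Lemma Ptri_union t t' : Ptri t -> Ptri t' -> t != t' -> (5 <= #|` t `|` t'|)%N.
Proof.
move=> Tt Tt' tt'; have := cardfsUI t t'; rewrite (Ptri_card Tt) (Ptri_card Tt').
have : (#|` t `&` t'| < 2)%N.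
  by rewrite ltnNge; apply: contra tt' => /(Ptri_linear Tt Tt') ->.
by lia.
Qed.

Lemma IP_card X : IP X -> X != fset0 -> (3 <= #|` X|)%N.
Proof. by case=> [->|[/Ptri_card ->|[X4 _] _]] //; exact: ltnW. Qed.

Lemma IP_card3 X : IP X -> #|` X| = 3%N -> Ptri X.
Proof. by case=> [->|[//|[X4 _] X3]]; [rewrite cardfs0 | rewrite X3 in X4]. Qed.

Lemma IP_big X : (5 <= #|` X|)%N -> IP X.
Proof. by move=> X5; right; right; split => //; exact: ltnW. Qed.

Lemma IP_free X : (4 <= #|` X|)%N -> (forall t, Ptri t -> ~ fsubset t X) -> IP X.
Proof. by move=> X4 free; right; right; split => // t /free. Qed.

Lemma IP_proper f g : IP f -> IP g -> f != fset0 -> fproper f g -> (5 <= #|` g|)%N.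
Proof.
move=> hf hg f0 fg; have f3 := IP_card hf f0; have fg_card := fproper_ltn_card fg.
case: hg => [g0|[Tg|[g4 g5]]].
- by rewrite g0 cardfs0 in fg_card.
- by rewrite (Ptri_card Tg) in fg_card; lia.
case: (leqP 4 #|` f|) => f4; first lia.
by apply: (g5 f); [apply: (IP_card3 hf); lia | exact: fproper_sub].
Qed.

Lemma IP_union_card f g : IP f -> IP g -> f != fset0 -> g != fset0 -> f != g ->
  (5 <= #|` f `|` g|)%N.
Proof.
move=> hf hg f0 g0 fg.
case: (boolP (fsubset f g)) => [sfg|/fsubsetPn[w wf wg]].
  by rewrite (fsetUidPr _ _ sfg); apply: (IP_proper hf hg f0); rewrite fproperEneq fg.
case: (boolP (fsubset g f)) => [sgf|/fsubsetPn[v vg vf]].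
  rewrite (fsetUidPl _ _ sgf); apply: (IP_proper hg hf g0).
  by rewrite fproperEneq eq_sym fg.
have ltf := card_ltn_sub (fsubsetUl f g) (fsubsetP (fsubsetUr f g) _ vg) vf.
have ltg := card_ltn_sub (fsubsetUr f g) (fsubsetP (fsubsetUl f g) _ wf) wg.
have f3 := IP_card hf f0; have g3 := IP_card hg g0.
case: (leqP 4 #|` f|) => f4; first lia.
case: (leqP 4 #|` g|) => g4; first lia.
by apply: Ptri_union fg; [apply: (IP_card3 hf) | apply: (IP_card3 hg)]; lia.
Qed.

(* A P-triangle plus one outside point u contains no set of I_P through u:
   such a set is either a second P-triangle sharing two points with the
   first, or the whole 4-set, which contains a P-triangle. *)
Lemma Ptri_plus_point (t g : {fset int}) (u : int) : Ptri t -> u \notin t -> u \in g ->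
  fsubset g (u |` t) -> ~ IP g.
Proof.
move=> Tt ut ug gut hg; have t3 := Ptri_card Tt.
have g0 : g != fset0 by apply/fset0Pn; exists u.
have g3 := IP_card hg g0; have ut4 : #|` u |` t| = 4%N by rewrite cardfsU1 ut t3.
case: (eqVneq #|` g| 3%N) => [/(IP_card3 hg) Tg|g_ne3].
  have gt_le4 : (#|` g `|` t| <= 4)%N.
    by rewrite -ut4 fsubset_leq_card // fsubUset gut fsubsetU1.
  have := cardfsUI g t; rewrite (Ptri_card Tg) t3 => gt_card.
  have gt : g = t by apply: (Ptri_linear Tg Tt); lia.
  by rewrite gt (negbTE ut) in ug.
have gE : g = u |` t.
  by apply/eqP; rewrite eqEfcard gut ut4; lia.
have : (5 <= #|` g|)%N.
  apply: (IP_proper (or_intror (or_introl Tt)) hg (Ptri_neq0 Tt)).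
  rewrite gE fproperE fsubsetU1 /=; apply/fsubsetPn.
  by exists u; [exact: fset1U1 | exact: ut].
by rewrite gE ut4.
Qed.

(* In the elimination of u from f and g with a 4-set U = (f `|` g) `\ u
   containing a P-triangle t, every point of f missing from g lies in t:
   otherwise t = U \ z, and g would sit inside u |` t. *)
Lemma Ptri_covers_diff (f g t : {fset int}) (u z : int) : IP g -> u \in g -> Ptri t ->
  fsubset t ((f `|` g) `\ u) -> (#|` (f `|` g) `\ u| <= 4)%N ->
  z \in f -> z \notin g -> z \in t.
Proof.
set U := (f `|` g) `\ u => hg ug Tt tU U4 zf zg.
apply: contraT => zt; exfalso.
have zU : z \in U by rewrite in_fsetD1 in_fsetU zf andbT; apply: contraNneq zg => ->.
have tE : t = U `\ z.
  apply/eqP; rewrite eqEfcard fsubsetD1 tU zt (Ptri_card Tt).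
  by move: U4; rewrite (cardfsD1 z U) zU; lia.
apply: (Ptri_plus_point Tt _ ug _ hg).
  by apply/negP => /(fsubsetP tU); rewrite in_fsetD1 eqxx.
apply/fsubsetP => y yg; rewrite in_fset1U tE !in_fsetD1 in_fsetU yg orbT andbT.
by case: (eqVneq y u) => //= _; rewrite andbT; apply: contraNneq zg => <-.
Qed.

Lemma Ptri_shift a t : Ptri t -> Ptri (shift a t).
Proof. by case=> k [c [Pk ->]]; exists k, (a + c); rewrite shift_tri. Qed.

Lemma IP_shift a X : IP X -> IP (shift a X).
Proof.
case=> [->|[TX|[X4 X5]]].
- by left; apply/fsetP => z; rewrite mem_shift !inE.
- by right; left; apply: Ptri_shift.
right; right; rewrite card_shift; split => // t Tt tX.
by apply: (X5 _ (Ptri_shift (- a) Tt)); rewrite -(shiftK a X) shiftS.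
Qed.

Lemma IP_Bmul g f : IP f -> IP (Bmul g f).
Proof.
move=> hf; case: (boolP ((f == fset0) || (g == fset0))) => [fg0|].
  left; apply/fsetP => z; rewrite inE; apply/negbTE/negP => /mem_Bmul[a [b [ag bf _]]].
  by case/orP: fg0 => /eqP e; [rewrite e in bf | rewrite e in ag].
rewrite negb_or => /andP[f0 g0].
case: (leqP 2 #|` g|) => g2; last first.
  have /cardfs1P[a ->] : #|` g| == 1%N by move: g0; rewrite -cardfs_gt0; lia.
  by rewrite Bmul1; apply: IP_shift.
have [a [b [ab ag bg]]] : exists a b, [/\ a < b, a \in g & b \in g].
  have [x [y [xy xg yg]]] := two_points g2.
  by case: (ltrP x y) => h; [exists x, y | exists y, x; split => //; move/eqP: xy; lia].
apply: IP_big; case: hf => [f0'|[[k [c [_ ->]]]|[f4 _]]].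
- by rewrite f0' eqxx in f0.
- exact: Bmul_tri_card ag bg ab.
by have := Bmul_card_gt ag bg ab f0; lia.
Qed.

Lemma IP_union f g : IP f -> IP g -> IP (f `|` g).
Proof.
move=> hf hg.
case: (eqVneq f fset0) => [->|f0]; first by rewrite fset0U.
case: (eqVneq g fset0) => [->|g0]; first by rewrite fsetU0.
case: (eqVneq f g) => [<-|fg]; first by rewrite fsetUid.
exact/IP_big/IP_union_card.
Qed.

(* The monomial elimination axiom.  U = (f `|` g) `\ u has at least four
   points; it is itself a valid eliminant unless it is a 4-set containing a
   P-triangle t, in which case t is one. *)
Lemma IP_elim f g u : IP f -> IP g -> u \in f -> u \in g ->
  exists h, IP h /\ fsubset ((f `\` g) `|` (g `\` f)) h /\ fsubset h ((f `|` g) `\ u).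
Proof.
move=> hf hg uf ug; set U := (f `|` g) `\ u.
case: (eqVneq f g) => [<-|fg].
  by exists fset0; rewrite fsetDv fsetU0 fsub0set; split => //; left.
have diffU : fsubset ((f `\` g) `|` (g `\` f)) U.
  apply/fsubsetP => z; rewrite /U in_fsetD1 !in_fsetU !in_fsetD.
  by case: (eqVneq z u) => [->|]; rewrite ?uf ?ug //= => _ /orP[]/andP[_ ->]; rewrite ?orbT.
have U4 : (4 <= #|` U|)%N.
  have f0 : f != fset0 by apply/fset0Pn; exists u.
  have g0 : g != fset0 by apply/fset0Pn; exists u.
  have := IP_union_card hf hg f0 g0 fg; rewrite /U (cardfsD1 u) in_fsetU uf; lia.
case: (leqP 5 #|` U|) => U5; first by exists U; split; [exact: IP_big | split].
case: (classic (exists t, Ptri t /\ fsubset t U)) => [[t [Tt tU]]|noT]; last first.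
  by exists U; split; [apply: IP_free => // t Tt tU; apply: noT; exists t | split].
exists t; split; [by right; left | split => //].
have U_le4 : (#|` U| <= 4)%N by lia.
apply/fsubsetP => z; rewrite in_fsetU !in_fsetD => /orP[]/andP[z_out z_in].
  exact: (Ptri_covers_diff hg ug Tt tU U_le4 z_in z_out).
by apply: (Ptri_covers_diff hf uf Tt _ _ z_in z_out); rewrite fsetUC.
Qed.

Lemma IP_tropical : tropical_ideal IP.
Proof.
split; last exact: IP_elim.
by split; [left | split; [exact: IP_union | move=> f g; exact: IP_Bmul]].
Qed.

(* The matroid of I_P has rank 3: {0, 1, 2} is too narrow to contain a
   triangle, while a set of four points either contains a P-triangle or is
   itself a set of I_P. *)
Lemma IP_rank : matroid_rank IP 3.
Proof.
split.
  exists [fset 0; 1; 2]; split; last exact: card_fset3.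
  move=> h hh h0; rewrite /supp => /[dup] h012 /fsubsetP hsub.
  have /(IP_card3 hh)[k [c [_ hE]]] : #|` h| = 3%N.
    have := fsubset_leq_card h012; rewrite card_fset3 //.
    by have := IP_card hh h0; lia.
  have c_in : c \in [fset 0; 1; 2] by apply: hsub; rewrite hE in_tri eqxx.
  have y_in : c + 3 * step k \in [fset 0; 1; 2].
    by apply: hsub; rewrite hE in_tri eqxx !orbT.
  have := step_gt0 k; move: c_in y_in; rewrite !in_fsetU !in_fset1.
  by move=> /orP[/orP[]|]/eqP ? /orP[/orP[]|]/eqP ?; lia.
move=> S hS; rewrite leqNgt; apply/negP => S4.
case: (classic (exists t, Ptri t /\ fsubset t S)) => [[t [Tt tS]]|noT].
  exact: (hS t (or_intror (or_introl Tt)) (Ptri_neq0 Tt) tS).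
apply: (hS S _ _ (fsubset_refl S)); last by rewrite -cardfs_gt0 (leq_trans _ S4).
by apply: IP_free => // t Tt tS; apply: noT; exists t.
Qed.

(* I_P is paving: a nonempty set of I_P with at least five points is not
   minimal, since removing one point leaves a set of I_P. *)
Lemma IP_paving C : circuit IP C -> #|` C| = 3%N \/ #|` C| = 4%N.
Proof.
case=> [[f [hf [f0 fC]]] fmin]; rewrite /supp in fC; subst C.
have f3 := IP_card hf f0; case: (leqP 5 #|` f|) => f5; last lia.
have [x xf] := fset0Pn _ f0; have fx := cardfsD1 x f; rewrite xf in fx.
have fxf : fsubset (f `\ x) f by apply: fsubsetDl.
have hfx : IP (f `\ x).
  apply: IP_free => [|t Tt tfx]; first lia.
  have tf := fmin t (or_intror (or_introl Tt)) (Ptri_neq0 Tt) (fsubset_trans tfx fxf).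
  by move: f5; rewrite /supp in tf; rewrite -tf (Ptri_card Tt).
have fx0 : f `\ x != fset0 by rewrite -cardfs_gt0; lia.
have := fmin _ hfx fx0 fxf; rewrite /supp => fxE.
by move: xf; rewrite -{1}fxE in_fsetD1 eqxx.
Qed.

Lemma IP_tri0 n : IP (tri n 0) <-> P n.
Proof.
split; last by move=> Pn; right; left; exists n, 0.
have := step_gt0 n => s_gt0.
case=> [e|[[k [c [Pk e]]]|[t4 _]]].
- by move: (card_tri n 0); rewrite e cardfs0.
- have x0 : 0 \in tri n 0 by rewrite in_tri eqxx.
  have xs : step n \in tri n 0 by rewrite in_tri add0r eqxx orbT.
  have zs : 0 != step n by apply/eqP; lia.
  have x0' := x0; have xs' := xs; rewrite e in x0' xs'.
  by have [-> _] := tri_linear zs x0 xs x0' xs'.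
by rewrite card_tri in t4.
Qed.

End PavingIdeal.

(* Diagonal argument: for any sequence F of ideals, the predicate
   P k := ~ F k (tri k 0) gives a paving ideal I_P of degree 3 which
   differs from F n on tri n 0, for every n. *)
Theorem mainTheorem8 :
  ~ exists F : nat -> (Bpoly -> Prop),
      forall I : Bpoly -> Prop, paving_tropical_ideal I 3 ->
        exists n : nat, forall f : Bpoly, I f <-> F n f.
Proof.
move=> [F enumF].
pose P k := ~ F k (tri k 0).
have pavP : paving_tropical_ideal (IP P) 3.
  by split; [split; [exact: IP_tropical | exact: IP_rank] | exact: IP_paving].
have [n Fn] := enumF _ pavP.
have notF : P n.
  move=> Fn0; have Pn : P n by apply/(IP_tri0 P n)/Fn.
  exact: Pn Fn0.
exact: notF (proj1 (Fn _) (proj2 (IP_tri0 P n) notF)).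
Qed.
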